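(* Let $X$ be an infinite compact metric space and $T:X\to X$ continuous, and let $T_K$ be the induced map on the hyperspace $K(X)$. Then $(K(X),T_K)$ is exactly Devaney chaotic if and only if $(X,T)$ is topologically exact and is an HY-system.
   Context: $K(X)$ is the space of non-empty closed subsets of $X$ with the Hausdorff metric $d_H(A,B)=\max\{\max_{x\in A}\min_{y\in B}d(x,y),\ \max_{y\in B}\min_{x\in A}d(x,y)\}$, and $T_K(C)=TC$. A dynamical system $(Y,S)$ (compact metric $Y$, continuous $S$) is topologically exact if for every non-empty open $U\subset Y$ there is $n\in\mathbb{N}$ with $S^nU=Y$; it is exactly Devaney chaotic if it is topologically exact and its periodic points (points $y$ with $S^ny=y$ for some $n\in\mathbb{N}$) are dense. $(Y,S)$ is transitive if for any non-empty open $U,V$ there is $n\in\mathbb{N}$ with $S^nU\cap V\ne\emptyset$; totally transitive if $(Y,S^n)$ is transitive for all $n\in\mathbb{N}$. $(Y,S)$ has dense small periodic sets if for every non-empty open $U\subset Y$ there exist a non-empty closed $Z\subset U$ and $k\in\mathbb{N}$ with $S^kZ\subset Z$. An HY-system is a totally transitive system with dense small periodic sets. *)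

From Stdlib Require Import Reals List.
Open Scope R_scope.

Definition is_metric {X : Type} (d : X -> X -> R) : Prop :=
  (forall x y, 0 <= d x y) /\
  (forall x, d x x = 0) /\
  (forall x y, d x y = 0 -> x = y) /\
  (forall x y, d x y = d y x) /\
  (forall x y z, d x z <= d x y + d y z).

(** sequential compactness (equivalent to compactness for metric spaces) *)
Definition compact_metric {X : Type} (d : X -> X -> R) : Prop :=
  forall u : nat -> X, exists (phi : nat -> nat) (l : X),
    (forall n, (phi n < phi (S n))%nat) /\
    (forall eps, 0 < eps -> exists N, forall n, (N <= n)%nat -> d (u (phi n)) l < eps).

Definition infinite_type (X : Type) : Prop :=
  forall l : list X, exists x, ~ In x l.

Definition continuous_map {X : Type} (d : X -> X -> R) (T : X -> X) : Prop :=
  forall x eps, 0 < eps -> exists delta, 0 < delta /\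
    forall y, d x y < delta -> d (T x) (T y) < eps.

(** A space is given by a carrier [Y], a predicate [dom] of admissible points,
    a ball relation [ball y z r] meaning "dist(y,z) < r", a notion of equality
    [eqv] of points, and a self-map [S]. *)
Section Generic.
Variables (Y : Type) (dom : Y -> Prop) (ball : Y -> Y -> R -> Prop)
          (eqv : Y -> Y -> Prop) (S : Y -> Y).

Definition open_in (U : Y -> Prop) : Prop :=
  (forall y, U y -> dom y) /\
  (forall y, U y -> exists eps, 0 < eps /\
     forall z, dom z -> ball y z eps -> U z).

Definition closed_in (Z : Y -> Prop) : Prop :=
  (forall y, Z y -> dom y) /\ open_in (fun y => dom y /\ ~ Z y).

Definition nonempty (U : Y -> Prop) : Prop := exists y, U y.

Definition topologically_exact : Prop :=
  forall U, open_in U -> nonempty U ->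
    exists n, (1 <= n)%nat /\
      forall z, dom z -> exists y, U y /\ eqv (Nat.iter n S y) z.

Definition dense_periodic_points : Prop :=
  forall U, open_in U -> nonempty U ->
    exists y, U y /\ exists n, (1 <= n)%nat /\ eqv (Nat.iter n S y) y.

Definition exactly_Devaney_chaotic : Prop :=
  topologically_exact /\ dense_periodic_points.

Definition transitive_map (S' : Y -> Y) : Prop :=
  forall U V, open_in U -> nonempty U -> open_in V -> nonempty V ->
    exists n, (1 <= n)%nat /\ exists y, U y /\ V (Nat.iter n S' y).

Definition totally_transitive : Prop :=
  forall m, (1 <= m)%nat -> transitive_map (Nat.iter m S).

Definition dense_small_periodic_sets : Prop :=
  forall U, open_in U -> nonempty U ->
    exists Z, nonempty Z /\ closed_in Z /\ (forall z, Z z -> U z) /\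
      exists k, (1 <= k)%nat /\ forall z, Z z -> Z (Nat.iter k S z).

Definition HY_system : Prop :=
  totally_transitive /\ dense_small_periodic_sets.

End Generic.

(** ** The base space X (all points admissible, Leibniz equality) *)
Definition ballX {X : Type} (d : X -> X -> R) (x y : X) (r : R) : Prop := d x y < r.
Definition allX {X : Type} (x : X) : Prop := True.

(** ** The hyperspace K(X) of non-empty closed subsets, with the Hausdorff metric *)
Definition closed_set {X : Type} (d : X -> X -> R) (C : X -> Prop) : Prop :=
  closed_in X allX (ballX d) C.

Definition in_KX {X : Type} (d : X -> X -> R) (C : X -> Prop) : Prop :=
  (exists x, C x) /\ closed_set d C.

(** [hausdorff_le d A B r] unfolds d_H(A,B) <= r, i.e.
    max_{a in A} min_{b in B} d(a,b) <= r and symmetrically (max/min are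
    attained since A, B are compact). *)
Definition hausdorff_le {X : Type} (d : X -> X -> R) (A B : X -> Prop) (r : R) : Prop :=
  (forall a, A a -> exists b, B b /\ d a b <= r) /\
  (forall b, B b -> exists a, A a /\ d a b <= r).

Definition ballK {X : Type} (d : X -> X -> R) (A B : X -> Prop) (r : R) : Prop :=
  exists r', r' < r /\ hausdorff_le d A B r'.

Definition set_eq {X : Type} (A B : X -> Prop) : Prop := forall x, A x <-> B x.

Definition T_K {X : Type} (T : X -> X) (C : X -> Prop) : X -> Prop :=
  fun y => exists x, C x /\ y = T x.

(** Everything rests on two descriptions of K(X):
    - the closed sets contained in a small ball B(u,eps) form an open set of K(X)
      containing {u} ([sets_near]);
    - every open set of K(X) containing A contains all closed sets that are
      two-sidedly r-close to a finite r-net of A ([hyperspace_open_net], from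
      total boundedness).
    (=>) Exactness of T_K on [sets_near u eps], tested on singleton targets, is
    exactness of T; a T_K-periodic set in [sets_near u eps] is a small periodic
    set.  Exactness makes T onto, hence totally transitive.
    (<=) Exactness of T gives one time N at which every r-ball around the net
    covers X, so the T^N-preimage of any C inside those balls lies in U.  Small
    periodic sets Z with T^k Z <= Z shrink (by compactness) to closed sets W with
    T^k W = W; their union over the net is a T_K-periodic point of U.  Infiniteness of X is only
    used to know that X is non-empty. *)

From Stdlib Require Import Reals List Lra Lia Classical IndefiniteDescription.
Open Scope R_scope.

Definition image_iter {X : Type} (T : X -> X) (n : nat) (C : X -> Prop) : X -> Prop :=
  fun x => exists y, C y /\ x = Nat.iter n T y.

Lemma iter_T_K {X : Type} (T : X -> X) (n : nat) (C : X -> Prop) (x : X) :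
  Nat.iter n (T_K T) C x <-> image_iter T n C x.
Proof.
  unfold image_iter. revert x; induction n as [|n IH]; intros x; simpl.
  - split; [intros H; exists x; auto | intros [y [Hy ->]]; exact Hy].
  - split.
    + intros [x' [Hx' ->]]. apply IH in Hx'. destruct Hx' as [y [Hy ->]]. eauto.
    + intros [y [Hy ->]]. exists (Nat.iter n T y). split; [apply IH; eauto | reflexivity].
Qed.

Lemma iter_mul {A : Type} (f : A -> A) (n m : nat) (x : A) :
  Nat.iter n (Nat.iter m f) x = Nat.iter (n * m) f x.
Proof. induction n as [|n IH]; simpl; [reflexivity|]. now rewrite IH, Nat.iter_add. Qed.

Lemma iter_surjective {A : Type} (f : A -> A) :
  (forall z, exists y, f y = z) -> forall n z, exists y, Nat.iter n f y = z.
Proof.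
  intros Hf n. induction n as [|n IH]; intros z; simpl; [eauto|].
  destruct (Hf z) as [z' <-]. destruct (IH z') as [y <-]. eauto.
Qed.

Lemma strict_mono_ge (phi : nat -> nat) :
  (forall n, (phi n < phi (S n))%nat) -> forall n, (n <= phi n)%nat.
Proof. intros H n. induction n; [lia|]. specialize (H n). lia. Qed.

Section MetricSpace.
Context {X : Type} (d : X -> X -> R).
Hypothesis Hd : is_metric d.

Lemma d_nonneg x y : 0 <= d x y.
Proof. apply Hd. Qed.
Lemma d_refl x : d x x = 0.
Proof. apply Hd. Qed.
Lemma d_sym x y : d x y = d y x.
Proof. apply Hd. Qed.
Lemma d_tri x y z : d x z <= d x y + d y z.
Proof. apply Hd. Qed.

Lemma d_small x y : (forall eps, 0 < eps -> d x y < eps) -> x = y.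
Proof.
  intros H. apply Hd. destruct (Rle_lt_or_eq_dec _ _ (d_nonneg x y)) as [h|h]; auto.
  specialize (H _ h). lra.
Qed.

Definition converges (u : nat -> X) (l : X) : Prop :=
  forall eps, 0 < eps -> exists N, forall n, (N <= n)%nat -> d (u n) l < eps.

Lemma closed_set_iff (C : X -> Prop) :
  closed_set d C <->
  forall x, ~ C x -> exists eps, 0 < eps /\ forall z, d x z < eps -> ~ C z.
Proof.
  split.
  - intros [_ [_ H]] x Hx. destruct (H x (conj I Hx)) as [e [He H']].
    exists e. split; [exact He|]. intros z Hz. exact (proj2 (H' z I Hz)).
  - intros H. split; [intros; exact I|]. split; [intros; exact I|].
    intros y [_ Hy]. destruct (H y Hy) as [e [He H']]. exists e. split; [exact He|].
    intros z _ Hz. split; [exact I|]. exact (H' z Hz).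
Qed.

Lemma closed_limit (C : X -> Prop) u x :
  closed_set d C -> converges u x -> (exists N, forall n, (N <= n)%nat -> C (u n)) -> C x.
Proof.
  intros HC Hu [N HN]. apply NNPP. intros Hx.
  destruct (proj1 (closed_set_iff C) HC x Hx) as [e [He H]].
  destruct (Hu e He) as [N' HN'].
  apply (H (u (max N N'))); [rewrite d_sym; apply HN'; lia | apply HN; lia].
Qed.

Lemma closed_singleton x0 : closed_set d (fun x => x = x0).
Proof.
  apply closed_set_iff. intros x Hx. exists (d x x0). split.
  - destruct (Rle_lt_or_eq_dec _ _ (d_nonneg x x0)) as [h|h]; auto.
    exfalso. apply Hx, Hd. auto.
  - intros z Hz ->. lra.
Qed.

Lemma closed_ball a r : closed_set d (fun x => d a x <= r).
Proof.
  apply closed_set_iff. intros x Hx. exists (d a x - r). split; [lra|].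
  intros z Hz Hz'. pose proof (d_tri a z x). rewrite (d_sym z x) in H. lra.
Qed.

Lemma open_ball a r : open_in X allX (ballX d) (fun x => d a x < r).
Proof.
  split; [intros; exact I|]. intros y Hy. exists (r - d a y). split; [lra|].
  intros z _ Hz. unfold ballX in Hz. pose proof (d_tri a y z). lra.
Qed.

Lemma closed_union C1 C2 :
  closed_set d C1 -> closed_set d C2 -> closed_set d (fun x => C1 x \/ C2 x).
Proof.
  rewrite !closed_set_iff. intros H1 H2 x Hx.
  destruct (H1 x) as [e1 [He1 G1]]; [tauto|].
  destruct (H2 x) as [e2 [He2 G2]]; [tauto|].
  exists (Rmin e1 e2). split; [now apply Rmin_glb_lt|].
  pose proof (Rmin_l e1 e2). pose proof (Rmin_r e1 e2).
  intros z Hz [Hz'|Hz']; [apply (G1 z) | apply (G2 z)]; auto; lra.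
Qed.

Lemma closed_inter C1 C2 :
  closed_set d C1 -> closed_set d C2 -> closed_set d (fun x => C1 x /\ C2 x).
Proof.
  rewrite !closed_set_iff. intros H1 H2 x Hx.
  destruct (classic (C1 x)) as [h|h].
  - destruct (H2 x) as [e [He G]]; [tauto|].
    exists e. split; [exact He|]. intros z Hz [_ Hz']. exact (G z Hz Hz').
  - destruct (H1 x h) as [e [He G]].
    exists e. split; [exact He|]. intros z Hz [Hz' _]. exact (G z Hz Hz').
Qed.

Lemma closed_intersection {I : Type} (F : I -> X -> Prop) :
  (forall j, closed_set d (F j)) -> closed_set d (fun x => forall j, F j x).
Proof.
  intros H. apply closed_set_iff. intros x Hx.
  apply not_all_ex_not in Hx. destruct Hx as [j Hj].
  destruct (proj1 (closed_set_iff _) (H j) x Hj) as [e [He G]].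
  exists e. split; [exact He|]. intros z Hz Hz'. exact (G z Hz (Hz' j)).
Qed.

Lemma closed_finite_union (F : X -> X -> Prop) (l : list X) :
  (forall a, closed_set d (F a)) -> closed_set d (fun x => exists a, In a l /\ F a x).
Proof.
  intros H. induction l as [|b l IH].
  - apply closed_set_iff. intros x _. exists 1. split; [lra|]. intros z _ [a [[] _]].
  - pose proof (closed_union _ _ (H b) IH) as HU. rewrite closed_set_iff in HU |- *.
    intros x Hx. destruct (HU x) as [e [He G]].
    { intros [h|[a [Ha h]]]; apply Hx; [exists b | exists a]; simpl; auto. }
    exists e. split; [exact He|]. intros z Hz [a [[<-|Ha] h]]; apply (G z Hz); eauto.
Qed.

Lemma continuous_iter T n : continuous_map d T -> continuous_map d (Nat.iter n T).
Proof.
  intros HT. induction n as [|n IH]; simpl.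
  - intros x e He. exists e. split; auto.
  - intros x e He. destruct (HT (Nat.iter n T x) e He) as [d1 [Hd1 H1]].
    destruct (IH x d1 Hd1) as [d2 [Hd2 H2]]. exists d2. split; [exact Hd2|].
    intros y Hy. apply H1, H2, Hy.
Qed.

Lemma converges_map f u x :
  continuous_map d f -> converges u x -> converges (fun n => f (u n)) (f x).
Proof.
  intros Hf Hu e He. destruct (Hf x e He) as [dl [Hdl H]].
  destruct (Hu dl Hdl) as [N HN]. exists N. intros n Hn.
  rewrite d_sym. apply H. rewrite d_sym. auto.
Qed.

Lemma closed_preimage f C :
  continuous_map d f -> closed_set d C -> closed_set d (fun x => C (f x)).
Proof.
  rewrite !closed_set_iff. intros Hf HC x Hx.
  destruct (HC (f x) Hx) as [e [He G]]. destruct (Hf x e He) as [dl [Hdl H]].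
  exists dl. split; [exact Hdl|]. intros z Hz. apply G, H, Hz.
Qed.

End MetricSpace.

Section CompactMetricSpace.
Context {X : Type} (d : X -> X -> R).
Hypothesis Hd : is_metric d.
Hypothesis Hc : compact_metric d.

(** Continuous images of closed sets are closed: a point approximated by the
    image is the image of a limit of a subsequence of preimages. *)
Lemma closed_image f C :
  continuous_map d f -> closed_set d C -> closed_set d (fun y => exists x, C x /\ y = f x).
Proof.
  intros Hf HC. apply (closed_set_iff d). intros y Hy. apply NNPP. intros Hn.
  assert (Happrox : forall n : nat, exists x, C x /\ d y (f x) < / (INR n + 1)).
  { intros n. apply NNPP. intros Hn'. apply Hn. exists (/ (INR n + 1)). split.
    - apply Rinv_0_lt_compat. pose proof (pos_INR n). lra.
    - intros z Hz [x [Hx ->]]. apply Hn'. eauto. }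
  apply functional_choice in Happrox. destruct Happrox as [u Hu].
  destruct (Hc u) as [phi [l [Hphi Hl]]].
  assert (Cl : C l).
  { apply (closed_limit d Hd C (fun n => u (phi n)) l HC Hl). exists O. intros; apply Hu. }
  apply Hy. exists l. split; [exact Cl|]. apply (d_small d Hd). intros e He.
  destruct (converges_map d Hd f _ _ Hf Hl (e/2)) as [N1 H1]; [lra|].
  destruct (archimed_cor1 (e/2)) as [N2 [H2 H2']]; [lra|].
  set (n := max N1 N2).
  specialize (H1 n ltac:(lia)). simpl in H1.
  assert (/ (INR (phi n) + 1) < e/2).
  { apply Rle_lt_trans with (/ INR N2); [|exact H2]. apply Rinv_le_contravar.
    - apply lt_0_INR; exact H2'.
    - pose proof (strict_mono_ge phi Hphi n).
      assert (INR N2 <= INR (phi n)) by (apply le_INR; lia). lra. }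
  pose proof (proj2 (Hu (phi n))). pose proof (d_tri d Hd y (f (u (phi n))) (f l)). lra.
Qed.

Fixpoint greedy_list (g : list X -> X) (n : nat) : list X :=
  match n with O => nil | S n => g (greedy_list g n) :: greedy_list g n end.

Lemma finite_net (A : X -> Prop) r : 0 < r ->
  exists l, (forall a, In a l -> A a) /\ (forall x, A x -> exists a, In a l /\ d x a < r).
Proof.
  intros Hr. apply NNPP. intros Hn.
  (* otherwise one can greedily pick an infinite [r]-separated sequence in [A] *)
  assert (Hfar : forall l, (forall a, In a l -> A a) ->
                   exists x, A x /\ forall a, In a l -> r <= d x a).
  { intros l Hl. apply NNPP. intros Hx. apply Hn. exists l. split; [exact Hl|].
    intros x Ax. apply NNPP. intros Hx'. apply Hx. exists x. split; [exact Ax|].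
    intros a Ha. apply Rnot_lt_le. intros h. apply Hx'. eauto. }
  destruct (Hfar nil) as [x0 _]; [intros a []|].
  assert (Hpick : forall l, exists x, (forall a, In a l -> A a) ->
                    A x /\ forall a, In a l -> r <= d x a).
  { intros l. destruct (classic (forall a, In a l -> A a)) as [h|h].
    - destruct (Hfar l h) as [x Hx]. exists x. auto.
    - exists x0. tauto. }
  apply functional_choice in Hpick. destruct Hpick as [g Hg].
  assert (HA : forall n a, In a (greedy_list g n) -> A a).
  { induction n; simpl; [tauto|]. intros a [<-|Ha]; auto. apply (Hg _ IHn). }
  assert (Hin : forall m n, (m < n)%nat -> In (g (greedy_list g m)) (greedy_list g n)).
  { intros m n. induction n; [lia|]. intros Hmn. simpl.
    destruct (Nat.eq_dec m n) as [->|h]; [left; auto | right; apply IHn; lia]. }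
  destruct (Hc (fun n => g (greedy_list g n))) as [phi [l [Hphi Hl]]].
  destruct (Hl (r/2)) as [N HN]; [lra|].
  pose proof (HN N (le_n _)) as h1. pose proof (HN (S N) (le_S _ _ (le_n _))) as h2.
  pose proof (proj2 (Hg _ (HA _)) _ (Hin _ _ (Hphi N))) as h3.
  pose proof (d_tri d Hd (g (greedy_list g (phi (S N)))) l (g (greedy_list g (phi N)))) as h4.
  rewrite (d_sym d Hd l) in h4. lra.
Qed.

Lemma decreasing_closed_limit (F : nat -> X -> Prop) (x : nat -> X) :
  (forall j, closed_set d (F j)) -> (forall j j' y, (j <= j')%nat -> F j' y -> F j y) ->
  (forall j, F j (x j)) ->
  exists phi l, converges d (fun n => x (phi n)) l /\ forall j, F j l.
Proof.
  intros HF Hmono Hx. destruct (Hc x) as [phi [l [Hphi Hl]]].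
  exists phi, l. split; [exact Hl|].
  intros j. apply (closed_limit d Hd (F j) _ l (HF j) Hl). exists j. intros n Hn.
  apply (Hmono j (phi n)); [pose proof (strict_mono_ge phi Hphi n); lia | apply Hx].
Qed.

(** A non-empty closed set [Z] with [T^k Z ⊆ Z] contains a non-empty closed set
    [W] with [T^k W = W], namely the intersection of the images [T^(jk) Z]. *)
Lemma invariant_core T (Z : X -> Prop) k :
  continuous_map d T -> closed_set d Z -> (exists z, Z z) ->
  (forall z, Z z -> Z (Nat.iter k T z)) ->
  exists W, (exists w, W w) /\ closed_set d W /\ (forall w, W w -> Z w) /\
    (forall x, image_iter T k W x <-> W x).
Proof.
  intros HT HZ [z0 Hz0] Hinv.
  set (Zj := fun j x => exists z, Z z /\ x = Nat.iter (j * k) T z).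
  assert (Zclosed : forall j, closed_set d (Zj j)).
  { intro j. apply closed_image; [apply continuous_iter|]; assumption. }
  assert (Zshift : forall j z, Nat.iter (S j * k) T z = Nat.iter k T (Nat.iter (j * k) T z)).
  { intros j z. replace (S j * k)%nat with (k + j * k)%nat by lia. apply Nat.iter_add. }
  assert (Zstep : forall j x, Zj (S j) x -> Zj j x).
  { intros j x [z [Hz ->]]. exists (Nat.iter k T z). split; [auto|].
    replace (S j * k)%nat with (j * k + k)%nat by lia. apply Nat.iter_add. }
  assert (Zmono : forall j j' y, (j <= j')%nat -> Zj j' y -> Zj j y).
  { intros j j' y H. induction H; auto. }
  exists (fun x => forall j, Zj j x). split; [|split; [|split]].
  - assert (H : forall j, exists x, Zj j x) by (intro j; exists (Nat.iter (j * k) T z0), z0; auto).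
    apply functional_choice in H. destruct H as [u Hu].
    destruct (decreasing_closed_limit Zj u Zclosed Zmono Hu) as [_ [l [_ Hl]]]. eauto.
  - apply closed_intersection. exact Zclosed.
  - intros w Hw. destruct (Hw O) as [z [Hz ->]]. exact Hz.
  - intros x. split.
    + intros [y [Hy ->]] j. apply Zstep. destruct (Hy j) as [z [Hz ->]].
      exists z. split; [exact Hz | symmetry; apply Zshift].
    + intros Hw.
      assert (H : forall j, exists y, Zj j y /\ x = Nat.iter k T y).
      { intro j. destruct (Hw (S j)) as [z [Hz ->]].
        exists (Nat.iter (j * k) T z). split; [exists z; auto | apply Zshift]. }
      apply functional_choice in H. destruct H as [u Hu].
      destruct (decreasing_closed_limit Zj u Zclosed Zmono (fun j => proj1 (Hu j)))
        as [phi [l [Hl Hlj]]].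
      exists l. split; [exact Hlj|]. apply (d_small d Hd). intros e He.
      destruct (converges_map d Hd _ _ _ (continuous_iter d T k HT) Hl e He) as [N HN].
      specialize (HN N (le_n N)). simpl in HN. rewrite <- (proj2 (Hu (phi N))) in HN. exact HN.
Qed.

End CompactMetricSpace.

Section BaseDynamics.
Context {X : Type} (d : X -> X -> R) (T : X -> X).
Hypothesis Hd : is_metric d.

(** An exact map on a non-empty space is onto: apply exactness to [U = X]. *)
Lemma exact_surjective (x0 : X) :
  topologically_exact X allX (ballX d) eq T -> forall z, exists y, T y = z.
Proof.
  intros HTE z. destruct (HTE (fun _ => True)) as [n [Hn Hz]].
  - split; [intros; exact I|]. intros y _. exists 1. split; [lra | auto].
  - exists x0; exact I.
  - destruct (Hz z I) as [y [_ Hy]]. destruct n as [|n]; [lia|].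
    exists (Nat.iter n T y). exact Hy.
Qed.

Lemma covering_persists (V : X -> Prop) n :
  (forall z, exists y, T y = z) ->
  (forall z, exists y, V y /\ Nat.iter n T y = z) ->
  forall m, (n <= m)%nat -> forall z, exists y, V y /\ Nat.iter m T y = z.
Proof.
  intros Hs H m Hm z. destruct (iter_surjective T Hs (m - n) z) as [z' <-].
  destruct (H z') as [y [Hy <-]]. exists y. split; [exact Hy|].
  rewrite <- Nat.iter_add. f_equal. lia.
Qed.

(** Exactness implies total transitivity: [T^N U = X] with [N] a multiple of [m]. *)
Lemma exact_totally_transitive (x0 : X) :
  topologically_exact X allX (ballX d) eq T -> totally_transitive X allX (ballX d) T.
Proof.
  intros HTE m Hm U V HUo [u Hu] HVo [v Hv].
  destruct (HTE U HUo (ex_intro _ u Hu)) as [N [HN HNs]].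
  destruct (covering_persists U N (exact_surjective x0 HTE) (fun z => HNs z I) (N * m)
              ltac:(nia) v) as [y [Hy Hyv]].
  exists N. split; [exact HN|]. exists y. split; [exact Hy|].
  rewrite iter_mul, Hyv. exact Hv.
Qed.

Lemma exact_common_time r (l : list X) : 0 < r ->
  (forall z, exists y, T y = z) ->
  topologically_exact X allX (ballX d) eq T ->
  exists N, (1 <= N)%nat /\
    forall a, In a l -> forall z, exists y, d a y < r /\ Nat.iter N T y = z.
Proof.
  intros Hr Hs HTE. induction l as [|b l IH].
  - exists 1%nat. split; [lia|]. intros a [].
  - destruct IH as [N [HN H]].
    destruct (HTE (fun x => d b x < r) (open_ball d Hd b r)) as [n [Hn Hb]].
    { exists b. rewrite (d_refl d Hd). exact Hr. }
    exists (max N n). split; [lia|]. intros a [<-|Ha] z.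
    + apply (covering_persists _ n Hs (fun z => Hb z I)). lia.
    + apply (covering_persists _ N Hs (H a Ha)). lia.
Qed.

Lemma image_iter_invariant_mul k W :
  (forall x, image_iter T k W x <-> W x) -> forall m x, image_iter T (m * k) W x <-> W x.
Proof.
  intros H m. induction m as [|m IH]; intros x; simpl.
  - split; [intros [y [Hy ->]]; exact Hy | intros Hx; exists x; auto].
  - split.
    + intros [y [Hy ->]]. rewrite Nat.iter_add. apply H.
      exists (Nat.iter (m * k) T y). split; [apply IH; exists y; auto | reflexivity].
    + intros Hx. apply H in Hx. destruct Hx as [y [Hy ->]]. apply IH in Hy.
      destruct Hy as [z [Hz ->]]. exists z. split; [exact Hz|]. symmetry; apply Nat.iter_add.
Qed.

(** With dense small periodic sets, every finite set of points is approximated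
    (two-sidedly, within [r]) by a closed set [W] with [T^k W = W]: take the
    union of the invariant cores of small periodic sets near each point. *)
Lemma periodic_set_near_list r (l : list X) :
  compact_metric d -> continuous_map d T -> 0 < r ->
  dense_small_periodic_sets X allX (ballX d) T ->
  exists W k, (1 <= k)%nat /\ closed_set d W /\
    (forall w, W w -> exists a, In a l /\ d a w < r) /\
    (forall a, In a l -> exists w, W w /\ d a w < r) /\
    (forall x, image_iter T k W x <-> W x).
Proof.
  intros Hc HT Hr HDS. induction l as [|b l IH].
  - exists (fun _ => False), 1%nat. split; [lia|]. split.
    + apply closed_set_iff. intros x _. exists 1. split; [lra | auto].
    + split; [tauto|]. split; [intros a []|]. intros x. split; [intros [y [[] _]] | tauto].
  - destruct IH as [W [k [Hk [HWc [HW1 [HW2 HWi]]]]]].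
    destruct (HDS (fun x => d b x < r) (open_ball d Hd b r)) as [Z [HZne [HZc [HZU [kb [Hkb HZi]]]]]].
    { exists b. rewrite (d_refl d Hd). exact Hr. }
    destruct (invariant_core d Hd Hc T Z kb HT HZc HZne HZi)
      as [Wb [[wb Hwb] [HWbc [HWbZ HWbi]]]].
    exists (fun x => W x \/ Wb x), (k * kb)%nat. split; [nia|].
    split; [apply closed_union; assumption|]. split; [|split].
    + intros w [h|h].
      * destruct (HW1 w h) as [a [Ha Haw]]. exists a. simpl; auto.
      * exists b. split; [simpl; auto | apply HZU, HWbZ, h].
    + intros a [<-|Ha].
      * exists wb. split; [right; exact Hwb | apply HZU, HWbZ, Hwb].
      * destruct (HW2 a Ha) as [w [Hw Hw']]. exists w. auto.
    + intros x. pose proof (image_iter_invariant_mul k W HWi kb x) as E1.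
      pose proof (image_iter_invariant_mul kb Wb HWbi k x) as E2.
      rewrite (Nat.mul_comm kb k) in E1. split.
      * intros [y [[h|h] ->]]; [left; apply E1 | right; apply E2]; exists y; auto.
      * intros [h|h]; [apply E1 in h | apply E2 in h]; destruct h as [y [Hy ->]]; exists y; auto.
Qed.

End BaseDynamics.

Section Hyperspace.
Context {X : Type} (d : X -> X -> R) (T : X -> X).
Hypothesis Hd : is_metric d.

(** The points of [K(X)] contained in a closed ball of radius [< eps] around [u];
    this is the [eps]-ball of [K(X)] around the singleton [{u}]. *)
Definition sets_near (u : X) (eps : R) : (X -> Prop) -> Prop :=
  fun C => in_KX d C /\ exists s, s < eps /\ forall c, C c -> d u c <= s.

Lemma sets_near_open u eps : open_in (X -> Prop) (in_KX d) (ballK d) (sets_near u eps).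
Proof.
  split; [intros C [h _]; exact h|]. intros C [HC [s [Hs HCs]]].
  exists (eps - s). split; [lra|]. intros D HD [r' [Hr' [_ H2]]]. split; [exact HD|].
  exists (s + r'). split; [lra|]. intros c Hc. destruct (H2 c Hc) as [a [Ha Hac]].
  pose proof (HCs a Ha). pose proof (d_tri d Hd u a c). lra.
Qed.

Lemma sets_near_singleton u eps : 0 < eps -> sets_near u eps (fun x => x = u).
Proof.
  intros He. split.
  - split; [exists u; reflexivity | apply closed_singleton, Hd].
  - exists 0. split; [lra|]. intros c ->. rewrite (d_refl d Hd). lra.
Qed.

Lemma hyperspace_open_net (Hc : compact_metric d) U A :
  open_in (X -> Prop) (in_KX d) (ballK d) U -> U A ->
  exists r l, 0 < r /\ (exists a, In a l) /\
    forall W, closed_set d W ->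
      (forall w, W w -> exists a, In a l /\ d a w <= r) ->
      (forall a, In a l -> exists w, W w /\ d a w <= r) -> U W.
Proof.
  intros [HUK HUo] HA. destruct (HUK A HA) as [[a0 Ha0] _].
  destruct (HUo A HA) as [eps [He HUe]].
  destruct (finite_net d Hd Hc A (eps/3)) as [l [Hl1 Hl2]]; [lra|].
  exists (eps/3), l. split; [lra|]. split; [destruct (Hl2 a0 Ha0) as [a [Ha _]]; eauto|].
  intros W HWc HW1 HW2. apply HUe.
  - split; [|exact HWc]. destruct (Hl2 a0 Ha0) as [a [Ha _]].
    destruct (HW2 a Ha) as [w [Hw _]]. exists w; exact Hw.
  - exists (2 * eps / 3). split; [lra|]. split.
    + intros a Ha. destruct (Hl2 a Ha) as [b [Hb Hab]]. destruct (HW2 b Hb) as [w [Hw Hbw]].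
      exists w. split; [exact Hw|]. pose proof (d_tri d Hd a b w). lra.
    + intros w Hw. destruct (HW1 w Hw) as [a [Ha Haw]].
      exists a. split; [apply Hl1, Ha | lra].
Qed.

(** Exactness of [T_K] on [sets_near u eps], tested on singletons, is exactness
    of [T] on the ball [B(u, eps)]. *)
Lemma exact_of_hyperspace_exact :
  topologically_exact (X -> Prop) (in_KX d) (ballK d) set_eq (T_K T) ->
  topologically_exact X allX (ballX d) eq T.
Proof.
  intros HKE U [_ HU] [u Hu]. destruct (HU u Hu) as [eps [He HUe]].
  destruct (HKE (sets_near u eps) (sets_near_open u eps)
                (ex_intro _ _ (sets_near_singleton u eps He))) as [n [Hn Hz]].
  exists n. split; [exact Hn|]. intros z _.
  destruct (Hz (fun x => x = z)) as [C [[[[c Hc] _] [s [Hs HC]]] HE]].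
  { split; [exists z; reflexivity | apply closed_singleton, Hd]. }
  exists c. split.
  - apply HUe; [exact I|]. unfold ballX. specialize (HC c Hc). lra.
  - apply (proj1 (HE (Nat.iter n T c))). apply iter_T_K. exists c. auto.
Qed.

(** A [T_K]-periodic point in [sets_near u eps] is a small periodic set. *)
Lemma small_periodic_of_hyperspace_periodic :
  dense_periodic_points (X -> Prop) (in_KX d) (ballK d) set_eq (T_K T) ->
  dense_small_periodic_sets X allX (ballX d) T.
Proof.
  intros HKP U [_ HU] [u Hu]. destruct (HU u Hu) as [eps [He HUe]].
  destruct (HKP (sets_near u eps) (sets_near_open u eps)
                (ex_intro _ _ (sets_near_singleton u eps He)))
    as [C [[[HCne HCc] [s [Hs HC]]] [n [Hn HE]]]].
  exists C. split; [exact HCne|]. split; [exact HCc|]. split.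
  - intros z Hz. apply HUe; [exact I|]. unfold ballX. specialize (HC z Hz). lra.
  - exists n. split; [exact Hn|]. intros z Hz. apply (proj1 (HE _)). apply iter_T_K.
    exists z. auto.
Qed.

(** Backward exactness: with [N] a common covering time for the [r]-balls around
    the net, [W = {x in the r-balls | T^N x in C}] lies in [U] and [T^N W = C]. *)
Lemma hyperspace_exact_of_exact (Hc : compact_metric d) (HT : continuous_map d T) :
  topologically_exact X allX (ballX d) eq T ->
  topologically_exact (X -> Prop) (in_KX d) (ballK d) set_eq (T_K T).
Proof.
  intros HTE U HUo [A HA].
  destruct (hyperspace_open_net Hc U A HUo HA) as [r [l [Hr [[a1 Ha1] HUnet]]]].
  destruct (exact_common_time d T Hd r l Hr (exact_surjective d T a1 HTE) HTE)
    as [N [HN1 HN]].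
  exists N. split; [exact HN1|]. intros C [[c0 Hc0] HCc].
  exists (fun x => (exists a, In a l /\ d a x <= r) /\ C (Nat.iter N T x)). split.
  - apply HUnet.
    + apply closed_inter.
      * apply closed_finite_union. intros a. apply closed_ball, Hd.
      * apply closed_preimage; [apply continuous_iter|]; assumption.
    + intros x [[a [Ha Hax]] _]. eauto.
    + intros a Ha. destruct (HN a Ha c0) as [y [Hy1 Hy2]].
      exists y. split; [|lra]. split; [exists a; split; [exact Ha | lra] | rewrite Hy2; exact Hc0].
  - intros x. rewrite iter_T_K. split.
    + intros [y [[_ Hy] ->]]. exact Hy.
    + intros Hx. destruct (HN a1 Ha1 x) as [y [Hy1 Hy2]]. exists y.
      split; [split; [exists a1; split; [exact Ha1 | lra] | rewrite Hy2; exact Hx] | auto].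
Qed.

(** Backward periodicity: a closed set [W] with [T^k W = W] near the net is a
    [T_K]-periodic point in [U]. *)
Lemma hyperspace_periodic_of_small_periodic (Hc : compact_metric d) (HT : continuous_map d T) :
  dense_small_periodic_sets X allX (ballX d) T ->
  dense_periodic_points (X -> Prop) (in_KX d) (ballK d) set_eq (T_K T).
Proof.
  intros HDS U HUo [A HA].
  destruct (hyperspace_open_net Hc U A HUo HA) as [r [l [Hr [_ HUnet]]]].
  destruct (periodic_set_near_list d T Hd r l Hc HT Hr HDS)
    as [W [k [Hk [HWc [HW1 [HW2 HWi]]]]]].
  exists W. split.
  - apply HUnet; [exact HWc| |].
    + intros w Hw. destruct (HW1 w Hw) as [a [Ha Haw]]. exists a. split; [exact Ha | lra].
    + intros a Ha. destruct (HW2 a Ha) as [w [Hw Haw]]. exists w. split; [exact Hw | lra].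
  - exists k. split; [exact Hk|]. intros x. rewrite iter_T_K. apply HWi.
Qed.

End Hyperspace.

Theorem mainTheorem2 (X : Type) (d : X -> X -> R) (T : X -> X)
  (Hd : is_metric d) (Hcomp : compact_metric d) (Hinf : infinite_type X)
  (HT : continuous_map d T) :
  exactly_Devaney_chaotic (X -> Prop) (in_KX d) (ballK d) set_eq (T_K T)
  <->
  (topologically_exact X allX (ballX d) eq T /\
   HY_system X allX (ballX d) T).
Proof.
  destruct (Hinf nil) as [x0 _].
  split.
  - intros [HKE HKP].
    assert (HTE : topologically_exact X allX (ballX d) eq T)
      by exact (exact_of_hyperspace_exact d T Hd HKE).
    split; [exact HTE|]. split.
    + exact (exact_totally_transitive d T x0 HTE).
    + exact (small_periodic_of_hyperspace_periodic d T Hd HKP).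
  - intros [HTE [_ HDS]]. split.
    + exact (hyperspace_exact_of_exact d T Hd Hcomp HT HTE).
    + exact (hyperspace_periodic_of_small_periodic d T Hd Hcomp HT HDS).
Qed.
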